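(* Let $v_0,v_1:[0,1]\to\{0,1\}$ be given by $v_0(0)=0$, $v_0(t)=1$ for $t\in(0,1]$, and $v_1(1)=1$, $v_1(t)=0$ for $t\in[0,1)$. For $v\in\{v_0,v_1\}$, consider the functor from the groupoid $\mathbf{\mathsf{P}SymmH}$ (objects: complex Hilbert spaces of dimension greater than $2$; morphisms: semiunitaries modulo multiplication by scalars of modulus $1$) to the category $\mathbf{Chu}_{\mathbf{2}}$ of Chu spaces over $\{0,1\}$, sending $\mathcal{H}\mapsto(\mathsf{P}(\mathcal{H}),\mathsf{L}(\mathcal{H}),v\circ\bar e_{\mathcal{H}})$ and $[U]\mapsto(\mathsf{P}(U),U^{-1})$. Then for neither $v=v_0$ nor $v=v_1$ is this functor full.
   Context: A Chu space over a set $K$ is a triple $(X,A,e)$ with $e:X\times A\to K$; a Chu morphism $(X,A,e)\to(X',A',e')$ is a pair $(f_*:X\to X',f^*:A'\to A)$ with $e(x,f^*(a'))=e'(f_*(x),a')$. For a complex Hilbert space $\mathcal{H}$: $\mathsf{L}(\mathcal{H})$ is the set of closed subspaces, $P_S$ the orthogonal projector onto $S$, $\mathsf{P}(\mathcal{H})$ the set of rays $[\psi]=\{\lambda\psi:\lambda\in\mathbb{C}\}$, $\psi\neq 0$, and $\bar e_{\mathcal{H}}([\psi],S)=\|P_S\psi\|^2/\|\psi\|^2$. A semiunitary is an additive bijection $U$ with $U(\lambda\phi)=\sigma(\lambda)U\phi$ and $\langle U\phi,U\psi\rangle=\sigma(\langle\phi,\psi\rangle)$, $\sigma$ the identity or complex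 conjugation; $\mathsf{P}(U)([\psi])=[U\psi]$ and $U^{-1}$ maps a closed subspace to its inverse image. A functor is full if it is surjective on each hom-set. *)

(* complex scalars are R[i] (mathcomp-real-closed) for an
   arbitrary R : realType (any realType is a model of the real numbers). *)
From HB Require Import structures.
From mathcomp Require Import all_boot all_order all_algebra.
From mathcomp Require Import complex reals.
From Stdlib Require Import ClassicalEpsilon.
Set Implicit Arguments. Unset Strict Implicit. Unset Printing Implicit Defensive.
Import Order.TTheory GRing.Theory Num.Theory.
Local Open Scope ring_scope.

Record chu (K : Type) := Chu {
  chu_pts : Type;
  chu_sts : Type;
  chu_ev : chu_pts -> chu_sts -> K }.

Definition chu_morphism (K : Type) (A B : chu K)
    (fl : chu_pts A -> chu_pts B) (fu : chu_sts B -> chu_sts A) : Prop :=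
  forall x a', chu_ev x (fu a') = chu_ev (fl x) a'.

Section Hilbert.
Variable R : realType.
Local Notation C := (R[i]).

Record hilbert := Hilbert {
  hcar : lmodType C;
  hip : hcar -> hcar -> C;
  hip_linl : forall (a : C) (x y z : hcar), hip (a *: x + y) z = a * hip x z + hip y z;
  hip_sym : forall x y : hcar, hip y x = Num.conj (hip x y);
  hip_ge0 : forall x : hcar, 0 <= hip x x;
  hip_eq0 : forall x : hcar, hip x x = 0 -> x = 0;
  (* completeness w.r.t. the norm ||x||^2 = <x,x> *)
  hcomplete : forall u : nat -> hcar,
    (forall e : C, 0 < e -> exists N, forall m n, (N <= m)%N -> (N <= n)%N ->
        hip (u m - u n) (u m - u n) < e) ->
    exists l, forall e : C, 0 < e -> exists N, forall n, (N <= n)%N ->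
        hip (u n - l) (u n - l) < e }.

Variable H : hilbert.
Local Notation V := (hcar H).
Local Notation ip := (@hip H).

Definition dim_gt2 : Prop :=
  exists e : 'I_3 -> V, forall c : 'I_3 -> C,
    \sum_(i < 3) c i *: e i = 0 -> forall i, c i = 0.

Definition closed_set (S : V -> Prop) : Prop :=
  forall (u : nat -> V) (l : V), (forall n, S (u n)) ->
    (forall e : C, 0 < e -> exists N, forall n, (N <= n)%N ->
        ip (u n - l) (u n - l) < e) -> S l.

Record csubspace := CSubspace {
  cs_set : V -> Prop;
  cs_0 : cs_set 0;
  cs_D : forall x y, cs_set x -> cs_set y -> cs_set (x + y);
  cs_Z : forall (a : C) x, cs_set x -> cs_set (a *: x);
  cs_closed : closed_set cs_set }.

Record ray := Ray {
  ray_set : V -> Prop;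
  ray_ok : exists psi : V, psi != 0 /\
      ray_set = (fun x => exists l : C, x = l *: psi) }.

(* orthogonal projector P_S psi: the (unique, by the projection theorem)
   p in S with psi - p orthogonal to S *)
Definition is_proj (S : csubspace) (psi p : V) : Prop :=
  cs_set S p /\ forall s, cs_set S s -> ip (psi - p) s = 0.

Definition proj (S : csubspace) (psi : V) : V :=
  epsilon (inhabits 0) (is_proj S psi).

Definition ray_rep (r : ray) : V :=
  epsilon (inhabits 0) (fun psi => psi != 0 /\ ray_set r psi).

Definition ebar (r : ray) (S : csubspace) : R :=
  complex.Re (ip (proj S (ray_rep r)) (proj S (ray_rep r)) / ip (ray_rep r) (ray_rep r)).

End Hilbert.

Arguments csubspace {R} H.
Arguments ray {R} H.

(* v_0, v_1 : [0,1] -> {0,1}  (only their values on [0,1] matter) *)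
Definition v0 (R : realType) (t : R) : bool := t != 0.
Definition v1 (R : realType) (t : R) : bool := t == 1.

Definition chuH (R : realType) (v : R -> bool) (H : hilbert R) : chu bool :=
  @Chu bool (ray H) (csubspace H) (fun r S => v (ebar r S)).

Definition semiunitary (R : realType) (H H' : hilbert R)
    (U : hcar H -> hcar H') : Prop :=
  bijective U /\ (forall x y, U (x + y) = U x + U y) /\
  exists sigma : R[i] -> R[i],
    (sigma = id \/ sigma = Num.conj) /\
    (forall (l : R[i]) x, U (l *: x) = sigma l *: U x) /\
    (forall x y, hip (U x) (U y) = sigma (hip x y)).

Definition image_of_semiunitary (R : realType) (H H' : hilbert R)
    (U : hcar H -> hcar H')
    (fl : ray H -> ray H') (fu : csubspace H' -> csubspace H) : Prop :=
  (forall r : ray H, ray_set (fl r) = (fun y => exists x, ray_set r x /\ y = U x)) /\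
  (forall S' : csubspace H', cs_set (fu S') = (fun x => cs_set S' (U x))).

Definition functor_full (R : realType) (v : R -> bool) : Prop :=
  forall (H H' : hilbert R), dim_gt2 H -> dim_gt2 H' ->
  forall (fl : ray H -> ray H') (fu : csubspace H' -> csubspace H),
    @chu_morphism bool (chuH v H) (chuH v H') fl fu ->
    exists U : hcar H -> hcar H',
      semiunitary U /\ image_of_semiunitary U fl fu.

From Pilot Require Import Defs.
From HB Require Import structures.
From mathcomp Require Import all_boot all_order all_algebra.
From mathcomp Require Import complex reals ring.
From mathcomp Require Import all_classical all_reals all_analysis.
From Stdlib Require Import ClassicalEpsilon.
Set Implicit Arguments. Unset Strict Implicit. Unset Printing Implicit Defensive.
Import Order.TTheory GRing.Theory Num.Theory.
Import numFieldNormedType.Exports.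
Local Open Scope ring_scope.

(* A Chu morphism (P(H), L(H), v o ebar) -> (P(H'), L(H'), v o ebar) only has to
   preserve the truth values v(ebar(x, S)).  As v is 0 at ebar(x, 0) = 0 and 1 at
   ebar(x, H) = 1, sending every ray to one fixed ray r and every S' to H or to 0
   according to v(ebar(r, S')) is a Chu morphism.  It is not of the form (P(U), U^-1),
   since P(U) is injective for bijective U while a space of dimension > 2 has two
   distinct rays.  Such a space exists: C^3, which is complete because R is. *)

Section HilbertFacts.
Variables (R : realType) (H : hilbert R).
Local Notation C := R[i].
Local Notation V := (hcar H).
Local Notation ip := (@hip R H).

Lemma hip0l (s : V) : ip 0 s = 0.
Proof.
have := hip_linl 1 0 0 s; rewrite scaler0 addr0 mul1r => double.
by apply: (addrI (ip 0 s)); rewrite addr0 -double.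
Qed.

Lemma hip0r (s : V) : ip s 0 = 0.
Proof. by rewrite hip_sym hip0l rmorph0. Qed.

Lemma closed_set0 : closed_set (fun x : V => x = 0).
Proof.
move=> u l u0 ul; apply/eqP; apply: contraT => l_neq0.
have pos : 0 < ip (0 - l) (0 - l).
  rewrite lt_def hip_ge0 andbT; apply: contra l_neq0 => /eqP/hip_eq0/eqP.
  by rewrite sub0r oppr_eq0.
have [N /(_ N (leqnn N))] := ul _ pos.
by rewrite u0 ltxx.
Qed.

Definition csubspaceT : csubspace H :=
  @CSubspace R H (fun _ => True) I (fun _ _ _ _ => I) (fun _ _ _ => I) (fun _ _ _ _ => I).

Definition csubspace0 : csubspace H.
Proof.
refine (@CSubspace R H (fun x => x = 0) erefl _ _ closed_set0).
- by move=> x y -> ->; rewrite addr0.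
- by move=> a x ->; rewrite scaler0.
Defined.

Lemma proj_spec (S : csubspace H) (psi p : V) :
  is_proj S psi p -> is_proj S psi (Defs.proj S psi).
Proof. by move=> Sp; rewrite /Defs.proj; apply: epsilon_spec; exists p. Qed.

Lemma projT (psi : V) : Defs.proj csubspaceT psi = psi.
Proof.
have [_ /(_ (psi - Defs.proj csubspaceT psi) I) /hip_eq0 /eqP] :
    is_proj csubspaceT psi (Defs.proj csubspaceT psi).
  by apply: (proj_spec (p := psi)); split=> // s _; rewrite subrr hip0l.
by rewrite subr_eq0 => /eqP.
Qed.

Lemma proj0 (psi : V) : Defs.proj csubspace0 psi = 0.
Proof.
have [] // : is_proj csubspace0 psi (Defs.proj csubspace0 psi).
by apply: (proj_spec (p := 0)); split=> // s ->; rewrite hip0r.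
Qed.

Lemma ray_rep_spec (r : ray H) : ray_rep r != 0 /\ ray_set r (ray_rep r).
Proof.
apply: (epsilon_spec (inhabits 0) (fun psi => psi != 0 /\ ray_set r psi)).
have [psi [psi_neq0 ->]] := ray_ok r.
by exists psi; split=> //; exists 1; rewrite scale1r.
Qed.

Lemma ebarT (r : ray H) : ebar r csubspaceT = 1.
Proof.
rewrite /ebar projT divff //; have [rep_neq0 _] := ray_rep_spec r.
by apply: contra rep_neq0 => /eqP/hip_eq0 ->.
Qed.

Lemma ebar0 (r : ray H) : ebar r csubspace0 = 0.
Proof. by rewrite /ebar proj0 hip0l mul0r. Qed.

Definition line (psi : V) (psi_neq0 : psi != 0) : ray H :=
  @Ray R H (fun x => exists l : C, x = l *: psi) (ex_intro _ psi (conj psi_neq0 erefl)).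

Lemma line_self (psi : V) (psi_neq0 : psi != 0) : ray_set (line psi_neq0) psi.
Proof. by exists 1; rewrite scale1r. Qed.

Lemma dim_gt2_noncollinear :
  dim_gt2 H -> exists x y : V, y != 0 /\ forall l : C, x != l *: y.
Proof.
case=> e free; pose i0 : 'I_3 := ord0; pose i1 : 'I_3 := lift ord0 ord0.
have pair_free a b : a *: e i0 + b *: e i1 = 0 -> a = 0 /\ b = 0.
  move=> ab0; have := free (fun i => nth 0 [:: a; b] i).
  rewrite !big_ord_recl big_ord0 /= scale0r !addr0 => /(_ ab0) c0.
  by split; [exact: (c0 i0) | exact: (c0 i1)].
exists (e i0), (e i1); split.
- apply/eqP => e1_0; have [_ /eqP] : (0 : C) = 0 /\ (1 : C) = 0.
    by apply: pair_free; rewrite e1_0 scale0r scaler0 addr0.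
  by rewrite oner_eq0.
- move=> l; apply/eqP => e0_l; have [/eqP] : (1 : C) = 0 /\ - l = 0.
    by apply: pair_free; rewrite scale1r e0_l scaleNr subrr.
  by rewrite oner_eq0.
Qed.

Lemma const_chu_morphism (v : R -> bool) (r : ray H) :
  v 0 = false -> v 1 = true ->
  @chu_morphism bool (chuH v H) (chuH v H) (fun _ => r)
    (fun S => if v (ebar r S) then csubspaceT else csubspace0).
Proof.
by move=> v0 v1 x S /=; case: (v (ebar r S)); rewrite ?ebarT ?ebar0.
Qed.

End HilbertFacts.

Lemma image_of_semiunitary_ray_sub (R : realType) (H H' : hilbert R)
    (U : hcar H -> hcar H') fl fu (r1 r2 : ray H) :
  injective U -> image_of_semiunitary U fl fu -> fl r1 = fl r2 ->
  forall x, ray_set r1 x -> ray_set r2 x.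
Proof.
move=> injU [im _] fl12 x r1x.
have : ray_set (fl r2) (U x) by rewrite -fl12 im; exists x.
by rewrite im => -[y [r2y /injU ->]].
Qed.

Lemma not_functor_full (R : realType) (v : R -> bool) (H : hilbert R) :
  v 0 = false -> v 1 = true -> dim_gt2 H -> ~ functor_full v.
Proof.
move=> v0 v1 dimH full.
have [x [y [y_neq0 xy]]] := dim_gt2_noncollinear dimH.
have x_neq0 : x != 0 by have := xy 0; rewrite scale0r.
have [U [[bijU _] imU]] :=
  full H H dimH dimH _ _ (const_chu_morphism (line y_neq0) v0 v1).
have [l /eqP] := image_of_semiunitary_ray_sub (r1 := line x_neq0) (r2 := line y_neq0)
  (bij_inj bijU) imU erefl (line_self x_neq0).
by rewrite (negbTE (xy l)).
Qed.

Section SquaredNormCompleteness.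
Variable R : realType.
Local Open Scope classical_set_scope.

(* Distances are measured squared, so that [hip x x] itself can play the role of [q]. *)
Definition cauchy_sq (T : zmodType) (q : T -> R) (u : nat -> T) : Prop :=
  forall e, 0 < e -> exists N, forall m n, (N <= m)%N -> (N <= n)%N -> q (u m - u n) < e.

Definition complete_sq (T : zmodType) (q : T -> R) : Prop :=
  forall u, cauchy_sq q u ->
  exists l, forall e, 0 < e -> exists N, forall n, (N <= n)%N -> q (u n - l) < e.

Lemma ltr_sqr_norm (x e : R) : 0 <= e -> (x ^+ 2 < e ^+ 2) = (`|x| < e).
Proof. by move=> e_ge0; rewrite -real_normK ?num_real // ltr_sqr ?nnegrE. Qed.

Lemma complete_sq_real : complete_sq (fun x : R => x ^+ 2).
Proof.
move=> u u_cauchy.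
have /cvgrPdist_lt u_cvg : cvg (u @ \oo).
  apply: cauchy_cvg; apply: cauchy_exP => e e_gt0.
  have [N uN] := u_cauchy _ (exprn_gt0 2 e_gt0).
  exists (u N), N => // n /= Nn; rewrite /ball /= -ltr_sqr_norm ?ltW //.
  exact: uN.
exists (lim (u @ \oo)) => e e_gt0.
have sqrt_e_gt0 : 0 < Num.sqrt e by rewrite sqrtr_gt0.
have [N _ uN] := u_cvg _ sqrt_e_gt0.
exists N => n /uN; rewrite distrC -ltr_sqr_norm ?sqrtr_ge0 // sqr_sqrtr //.
exact: ltW.
Qed.

Lemma complete_sq_pair (T1 T2 : zmodType) (q1 : T1 -> R) (q2 : T2 -> R) :
  (forall x, 0 <= q1 x) -> (forall x, 0 <= q2 x) ->
  complete_sq q1 -> complete_sq q2 -> complete_sq (fun x : T1 * T2 => q1 x.1 + q2 x.2).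
Proof.
move=> q1_ge0 q2_ge0 q1_complete q2_complete u u_cauchy.
have [l1 ul1] : exists l1, forall e, 0 < e ->
    exists N, forall n, (N <= n)%N -> q1 ((u n).1 - l1) < e.
  apply: q1_complete => e /u_cauchy[N uN]; exists N => m n Nm Nn.
  by apply: le_lt_trans (uN m n Nm Nn); rewrite lerDl.
have [l2 ul2] : exists l2, forall e, 0 < e ->
    exists N, forall n, (N <= n)%N -> q2 ((u n).2 - l2) < e.
  apply: q2_complete => e /u_cauchy[N uN]; exists N => m n Nm Nn.
  by apply: le_lt_trans (uN m n Nm Nn); rewrite lerDr.
exists (l1, l2) => e e_gt0.
have [N1 uN1] := ul1 _ (divr_gt0 e_gt0 (ltr0n _ 2)).
have [N2 uN2] := ul2 _ (divr_gt0 e_gt0 (ltr0n _ 2)).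
exists (maxn N1 N2) => n; rewrite geq_max => /andP[N1n N2n].
by rewrite [e](splitr e) ltrD ?uN1 ?uN2.
Qed.

End SquaredNormCompleteness.

Section ComplexCoordinates.
Variable R : realType.
Local Notation C := R[i].

Definition sqmod (z : C) : R := complex.Re z ^+ 2 + complex.Im z ^+ 2.

Lemma sqmod_ge0 (z : C) : 0 <= sqmod z.
Proof. by rewrite addr_ge0 ?sqr_ge0. Qed.

Lemma mul_conj_sqmod (z : C) : z * Num.conj z = (sqmod z)%:C%C.
Proof. by rewrite /sqmod add_Re2_Im2 sqr_normc. Qed.

Lemma sqmodB (x y : C) :
  sqmod (x - y) = (complex.Re x - complex.Re y) ^+ 2 + (complex.Im x - complex.Im y) ^+ 2.
Proof. by case: x y => ? ? []. Qed.

Lemma complete_sqmod : complete_sq sqmod.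
Proof.
move=> u u_cauchy.
have := complete_sq_pair (@sqr_ge0 R) (@sqr_ge0 R)
  (@complete_sq_real R) (@complete_sq_real R)
  (u := fun n => (complex.Re (u n), complex.Im (u n))).
case=> [e /u_cauchy[N uN] | [a b] uab].
  by exists N => m n Nm Nn; rewrite -sqmodB uN.
exists (a +i* b)%C => e /uab[N uN]; exists N => n Nn.
by rewrite sqmodB; apply: uN.
Qed.

End ComplexCoordinates.

Section ComplexThreeSpace.
Variable R : realType.
Local Notation C := R[i].

Definition V3 := (C * C * C)%type.

Definition ip3 (x y : V3) : C :=
  x.1.1 * Num.conj y.1.1 + x.1.2 * Num.conj y.1.2 + x.2 * Num.conj y.2.

Definition sqnorm3 (x : V3) : R := sqmod x.1.1 + sqmod x.1.2 + sqmod x.2.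

Lemma ip3_sqnorm3 (x : V3) : ip3 x x = (sqnorm3 x)%:C%C.
Proof. by rewrite /ip3 !mul_conj_sqmod !rmorphD. Qed.

Lemma ip3_linl (a : C) (x y z : V3) : ip3 (a *: x + y) z = a * ip3 x z + ip3 y z.
Proof.
have scaleE (b w : C) : b *: w = b * w by [].
by rewrite /ip3 /= !scaleE; ring.
Qed.

Lemma ip3_sym (x y : V3) : ip3 y x = Num.conj (ip3 x y).
Proof.
have conjM (a b : C) : Num.conj (a * b) = Num.conj a * Num.conj b := rmorphM _ a b.
have conjD (a b : C) : Num.conj (a + b) = Num.conj a + Num.conj b := rmorphD _ a b.
by rewrite /ip3 !conjD !conjM !conjCK ![_ * Num.conj _]mulrC.
Qed.

Lemma ip3_ge0 (x : V3) : 0 <= ip3 x x.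
Proof. by rewrite /ip3 !addr_ge0 // mul_conjC_ge0. Qed.

Lemma ip3_eq0 (x : V3) : ip3 x x = 0 -> x = 0.
Proof.
move/eqP; rewrite /ip3 !paddr_eq0 ?addr_ge0 ?mul_conjC_ge0 // !mul_conjC_eq0.
by case: x => [[? ?] ?] /= /andP[/andP[/eqP -> /eqP ->] /eqP ->].
Qed.

Lemma complete_sqnorm3 : complete_sq sqnorm3.
Proof.
have sqmod2_ge0 (y : C * C) : 0 <= sqmod y.1 + sqmod y.2 by rewrite addr_ge0 ?sqmod_ge0.
exact: complete_sq_pair sqmod2_ge0 (@sqmod_ge0 R)
  (complete_sq_pair (@sqmod_ge0 R) (@sqmod_ge0 R) (@complete_sqmod R) (@complete_sqmod R))
  (@complete_sqmod R).
Qed.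

Lemma ip3_complete (u : nat -> V3) :
  (forall e : C, 0 < e -> exists N, forall m n, (N <= m)%N -> (N <= n)%N ->
      ip3 (u m - u n) (u m - u n) < e) ->
  exists l, forall e : C, 0 < e -> exists N, forall n, (N <= n)%N ->
      ip3 (u n - l) (u n - l) < e.
Proof.
move=> u_cauchy.
have [l ul] : exists l, forall e, 0 < e -> exists N, forall n, (N <= n)%N ->
    sqnorm3 (u n - l) < e.
  apply: complete_sqnorm3 => e e_gt0.
  have [|N uN] := u_cauchy e%:C%C; first by rewrite ltcR.
  by exists N => m n Nm Nn; rewrite -ltcR -ip3_sqnorm3 uN.
exists l => e; rewrite ltcE => /andP[/eqP Im_e Re_e]; have [N uN] := ul _ Re_e.
by exists N => n Nn; rewrite ip3_sqnorm3 ltcE Im_e /= eqxx uN.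
Qed.

Definition hilbert3 : hilbert R :=
  Hilbert ip3_linl ip3_sym ip3_ge0 ip3_eq0 ip3_complete.

Lemma dim_gt2_hilbert3 : dim_gt2 hilbert3.
Proof.
pose e (i : 'I_3) : V3 := match val i with
  | 0 => (1, 0, 0) | 1 => (0, 1, 0) | _ => (0, 0, 1) end.
exists e => c; rewrite !big_ord_recl big_ord0 /= => sum0.
have scaleE (b w : C) : b *: w = b * w by [].
have := congr1 (fun x : V3 => x.1.1) sum0; have := congr1 (fun x : V3 => x.1.2) sum0.
have := congr1 (fun x : V3 => x.2) sum0.
rewrite /= !scaleE !mulr0 !mulr1 !addr0 !add0r => c2 c1 c0.
by case=> [[|[|[|//]]] lt_i]; [rewrite -c0 | rewrite -c1 | rewrite -c2];
  congr c; apply: val_inj.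
Qed.

End ComplexThreeSpace.

Theorem proposition4p3 (R : realType) :
  ~ functor_full (@v0 R) /\ ~ functor_full (@v1 R).
Proof.
split; apply: (not_functor_full (H := hilbert3 R)) (dim_gt2_hilbert3 R).
- by rewrite /v0 eqxx.
- by rewrite /v0 oner_eq0.
- by rewrite /v1 eq_sym oner_eq0.
- by rewrite /v1 eqxx.
Qed.
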